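(* Let $1\le k\le n$, let $\mathrm{St}(n,k)=\{Y\in\mathbb{R}^{n\times k}: Y^\top Y=I_k\}$ carry the metric $\langle V,W\rangle=2\operatorname{tr}(V^\top W)$ (the ''Euclidean metric''), fix $X\in \mathrm{St}(n,k)$, and let $\beta\colon I\to T_X\mathrm{St}(n,k)$ be a curve ($I$ an interval containing $0$). Let $u(t)=\big(\dot\beta(t)X^\top-X\dot\beta(t)^\top,\;X^\top\dot\beta(t)\big)\in\mathfrak p$. Let $S\colon I\to O(\mathfrak p)$, $q=(R,\theta)\colon I\to O(n)\times O(k)$ and $T\colon I\to O(N_X\mathrm{St}(n,k))$ be the solutions (assumed defined on $I$) of $$\dot S(t)=-\tfrac12\,\mathrm{pr}_{\mathfrak p}\circ \mathrm{ad}_{S(t)u(t)}\circ S(t),\quad S(0)=\mathrm{id}_{\mathfrak p},$$ $$(\dot R(t),\dot\theta(t))=(R(t)\xi_1(t),\theta(t)\xi_2(t)),\quad (R(0),\theta(0))=(I_n,I_k),\quad\text{where }(\xi_1(t),\xi_2(t)):=S(t)u(t),$$ $$\dot T(t)=-P_X^\perp\circ f_{(\xi_1(t),\xi_2(t))}\circ T(t),\quad T(0)=\mathrm{id}_{N_X\mathrm{St}(n,k)}.$$ Define $\widehat\beta(t)=R(t)X\theta(t)^\top$, define $B(t)\colon T_X\mathrm{St}(n,k)\to T_{\widehat\beta(t)}\mathrm{St}(n,k)$ by $B(t)V=R(t)(\eta_1X-X\eta_2)\theta(t)^\top$ where $(\eta_1,\eta_2)=S(t)\big(VX^\top-XV^\top,\,X^\top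 V\big)$, and define $C(t)\colon N_X\mathrm{St}(n,k)\to N_{\widehat\beta(t)}\mathrm{St}(n,k)$ by $C(t)W=R(t)\,(T(t)W)\,\theta(t)^\top$. Then $(\beta(t),\widehat\beta(t),B(t),C(t))$ is an extrinsic rolling of $T_X\mathrm{St}(n,k)$ over $\mathrm{St}(n,k)$ with respect to the Euclidean metric.
   Context: $O(n)\times O(k)$ acts on $\mathbb{R}^{n\times k}$ by $\Phi_{(R,\theta)}(V)=RV\theta^\top$. Its Lie algebra $\mathfrak g=\mathfrak{so}(n)\times\mathfrak{so}(k)$ carries the $\mathrm{Ad}$-invariant scalar product $\langle(\Omega_1,\Psi_1),(\Omega_2,\Psi_2)\rangle=-\operatorname{tr}(\Omega_1\Omega_2)+2\operatorname{tr}(\Psi_1\Psi_2)$; $\mathfrak h=\{(\Omega,\eta)\in\mathfrak g:\Omega X=X\eta\}$ is the Lie algebra of the stabilizer $H$ of $X$, $\mathfrak p=\mathfrak h^\perp$, and $\mathrm{pr}_{\mathfrak p}\colon\mathfrak g\to\mathfrak p$ (projection along $\mathfrak h$) is $\mathrm{pr}_{\mathfrak p}(\Omega,\eta)=(XX^\top\Omega+\Omega XX^\top-2X\eta X^\top,\;X^\top\Omega X-\eta)$. $\mathrm{ad}_Y Z=[Y,Z]$ (componentwise commutator) and $O(\mathfrak p)$ is the group of linear maps of $\mathfrak p$ preserving $\langle\cdot,\cdot\rangle$. $T_Y\mathrm{St}(n,k)=\{V: Y^\top V+V^\top Y=0\}$, $N_Y\mathrm{St}(n,k)$ is its orthogonal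 complement in $\mathbb{R}^{n\times k}$ for the Frobenius product, $P_Y^\perp(V)=\tfrac12 Y(Y^\top V+V^\top Y)$ is the orthogonal projection onto $N_Y\mathrm{St}(n,k)$, and $f_{(\xi_1,\xi_2)}(V)=\xi_1V-V\xi_2$. The linear subspace $T_X\mathrm{St}(n,k)\subset\mathbb{R}^{n\times k}$ is viewed as a submanifold with tangent space $T_X\mathrm{St}(n,k)$ and normal space $N_X\mathrm{St}(n,k)$ at every point. An extrinsic rolling of a submanifold $M$ over a submanifold $\widehat M$ of equal dimension (both isometrically embedded in the same pseudo-Euclidean space) is a quadruple $(\alpha,\widehat\alpha,A,C)$ of curves $\alpha$ in $M$, $\widehat\alpha$ in $\widehat M$ and linear isometries $A(t)\colon T_{\alpha(t)}M\to T_{\widehat\alpha(t)}\widehat M$, $C(t)\colon N_{\alpha(t)}M\to N_{\widehat\alpha(t)}\widehat M$ such that: $\dot{\widehat\alpha}(t)=A(t)\dot\alpha(t)$; $A(t)Z(t)$ is parallel (Levi-Civita) along $\widehat\alpha$ iff $Z$ is parallel along $\alpha$; and $C(t)Z(t)$ is normal parallel along $\widehat\alpha$ iff $Z$ is normal parallel along $\alpha$, where a normal vector field $Z$ along a curve $c$ is normal parallel if the normal component of $\tfrac{d}{dt}Z(t)$ vanishes. On $T_X\mathrm{St}(n,k)$ parallel (tangent or normal) fields along curves are the constant ones. *)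

From HB Require Import structures.
From mathcomp Require Import all_boot all_order all_algebra.
From mathcomp Require Import all_classical all_reals all_analysis.
Set Implicit Arguments. Unset Strict Implicit. Unset Printing Implicit Defensive.
Import Order.TTheory GRing.Theory Num.Theory numFieldNormedType.Exports.
Local Open Scope classical_set_scope.
Local Open Scope ring_scope.

Section StiefelRolling.
Variable R : realType.

(** ** Derivatives of curves, relative to a (possibly closed/half-open)
    interval [I]: at endpoints this is the one-sided derivative. *)
Definition has_deriv_in (I : set R) (f : R -> R) (t d : R) : Prop :=
  (fun h : R => h^-1 * (f (t + h) - f t)) @ within (fun h => I (t + h)) (0 : R)^' --> (d : R).

Definition mx_deriv_in m p (I : set R) (F : R -> 'M[R]_(m, p)) (t : R)
  (D : 'M[R]_(m, p)) : Prop :=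
  forall i j, has_deriv_in I (fun s => F s i j) t (D i j).

Definition eucl m p (V W : 'M[R]_(m, p)) : R := 2 * \tr (V^T *m W).

Definition Stiefel n k : set 'M[R]_(n, k) := [set Y | Y^T *m Y = 1%:M].

Definition TSt n k (Y : 'M[R]_(n, k)) : set 'M[R]_(n, k) :=
  [set V | Y^T *m V + V^T *m Y = 0].

Definition NSt n k (Y : 'M[R]_(n, k)) : set 'M[R]_(n, k) :=
  [set W | forall V, TSt Y V -> eucl V W = 0].

Definition Pperp n k (Y V : 'M[R]_(n, k)) : 'M[R]_(n, k) :=
  2^-1 *: (Y *m (Y^T *m V + V^T *m Y)).

Definition orthmx n (Q : 'M[R]_n) : Prop := Q^T *m Q = 1%:M.

Definition gT n k := ('M[R]_n * 'M[R]_k)%type.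

Definition gadd n k (x y : gT n k) : gT n k := (x.1 + y.1, x.2 + y.2).
Definition gscale n k (a : R) (x : gT n k) : gT n k := (a *: x.1, a *: x.2).

Definition skew m (A : 'M[R]_m) : Prop := A^T = - A.

Definition g_sub n k : set (gT n k) := [set x | skew x.1 /\ skew x.2].

Definition ginner n k (x y : gT n k) : R :=
  - \tr (x.1 *m y.1) + 2 * \tr (x.2 *m y.2).

(* Lie algebra of the stabilizer H of X *)
Definition h_sub n k (X : 'M[R]_(n, k)) : set (gT n k) :=
  [set x | g_sub x /\ x.1 *m X = X *m x.2].

Definition p_sub n k (X : 'M[R]_(n, k)) : set (gT n k) :=
  [set x | g_sub x /\ forall y, h_sub X y -> ginner x y = 0].

Definition prp n k (X : 'M[R]_(n, k)) (x : gT n k) : gT n k :=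
  (X *m X^T *m x.1 + x.1 *m X *m X^T - 2%:R *: (X *m x.2 *m X^T),
   X^T *m x.1 *m X - x.2).

Definition gad n k (y z : gT n k) : gT n k :=
  (y.1 *m z.1 - z.1 *m y.1, y.2 *m z.2 - z.2 *m y.2).

Definition fxi n k (xi : gT n k) (V : 'M[R]_(n, k)) : 'M[R]_(n, k) :=
  xi.1 *m V - V *m xi.2.

Definition pvec n k (X V : 'M[R]_(n, k)) : gT n k :=
  (V *m X^T - X *m V^T, X^T *m V).

Definition g_deriv_in n k (I : set R) (F : R -> gT n k) (t : R) (D : gT n k)
  : Prop :=
  mx_deriv_in I (fun s => (F s).1) t D.1 /\ mx_deriv_in I (fun s => (F s).2) t D.2.

Definition Op n k (X : 'M[R]_(n, k)) (L : gT n k -> gT n k) : Prop :=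
  [/\ (forall x, p_sub X x -> p_sub X (L x)),
      (forall a x y, p_sub X x -> p_sub X y ->
        L (gadd (gscale a x) y) = gadd (gscale a (L x)) (L y))
    & forall x y, p_sub X x -> p_sub X y -> ginner (L x) (L y) = ginner x y].

Definition lin_isom n k (U W : set 'M[R]_(n, k)) (L : 'M[R]_(n, k) -> 'M[R]_(n, k))
  : Prop :=
  [/\ (forall v, U v -> W (L v)),
      (forall a v w, U v -> U w -> L (a *: v + w) = a *: L v + L w)
    & forall v w, U v -> U w -> eucl (L v) (L w) = eucl v w].

(** ** Extrinsic rolling.  A submanifold is given by its point set together
    with its families of tangent and normal spaces. *)

(* Z is (Levi-Civita) parallel along c: Z tangent, differentiable, and the
   tangential component of dZ/dt vanishes, i.e. dZ/dt is normal. *)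
Definition tparallel n k (I : set R) (TM NM : 'M[R]_(n, k) -> set 'M[R]_(n, k))
  (c Z : R -> 'M[R]_(n, k)) : Prop :=
  (forall t, I t -> TM (c t) (Z t)) /\
  exists D : R -> 'M[R]_(n, k),
    (forall t, I t -> mx_deriv_in I Z t (D t)) /\ (forall t, I t -> NM (c t) (D t)).

(* Z is normal parallel along c: Z normal, differentiable, and the normal
   component of dZ/dt vanishes, i.e. dZ/dt is tangent. *)
Definition nparallel n k (I : set R) (TM NM : 'M[R]_(n, k) -> set 'M[R]_(n, k))
  (c Z : R -> 'M[R]_(n, k)) : Prop :=
  (forall t, I t -> NM (c t) (Z t)) /\
  exists D : R -> 'M[R]_(n, k),
    (forall t, I t -> mx_deriv_in I Z t (D t)) /\ (forall t, I t -> TM (c t) (D t)).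

Definition mx_differentiable_in n k (I : set R) (Z : R -> 'M[R]_(n, k)) : Prop :=
  exists D : R -> 'M[R]_(n, k), forall t, I t -> mx_deriv_in I Z t (D t).

Definition extrinsic_rolling n k (I : set R)
  (M : set 'M[R]_(n, k)) (TM NM : 'M[R]_(n, k) -> set 'M[R]_(n, k))
  (Mh : set 'M[R]_(n, k)) (TMh NMh : 'M[R]_(n, k) -> set 'M[R]_(n, k))
  (alpha alphah : R -> 'M[R]_(n, k))
  (A C : R -> 'M[R]_(n, k) -> 'M[R]_(n, k)) : Prop :=
  [/\ (forall t, I t -> M (alpha t) /\ Mh (alphah t)) /\
      (forall t, I t -> lin_isom (TM (alpha t)) (TMh (alphah t)) (A t)) /\
      (forall t, I t -> lin_isom (NM (alpha t)) (NMh (alphah t)) (C t)),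
      (exists Da Dah : R -> 'M[R]_(n, k),
        [/\ (forall t, I t -> mx_deriv_in I alpha t (Da t)),
            (forall t, I t -> mx_deriv_in I alphah t (Dah t))
          & forall t, I t -> Dah t = A t (Da t)]),
      (forall Z : R -> 'M[R]_(n, k),
        (forall t, I t -> TM (alpha t) (Z t)) -> mx_differentiable_in I Z ->
        (tparallel I TMh NMh alphah (fun t => A t (Z t)) <->
         tparallel I TM NM alpha Z))
    & (forall Z : R -> 'M[R]_(n, k),
        (forall t, I t -> NM (alpha t) (Z t)) -> mx_differentiable_in I Z ->
        (nparallel I TMh NMh alphah (fun t => C t (Z t)) <->
         nparallel I TM NM alpha Z))].

End StiefelRolling.

From Pilot Require Import Defs.
From HB Require Import structures.
From mathcomp Require Import all_boot all_order all_algebra.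
From mathcomp Require Import all_classical all_reals all_analysis.
From mathcomp Require Import ring lra.
Import Order.TTheory GRing.Theory Num.Theory numFieldNormedType.Exports.
Local Open Scope classical_set_scope.
Local Open Scope ring_scope.
Set Implicit Arguments. Unset Strict Implicit. Unset Printing Implicit Defensive.

(* Acting by q(t) = (R(t), θ(t)) carries T_X St and N_X St isometrically onto
   the tangent and normal spaces at β̂(t) = R X θ^T.  Composing with the isometry
   S(t) of p ≅ T_X St (resp. T(t) of N_X St) shows that B(t) (resp. C(t)) is a
   linear isometry, and the equation for q gives dβ̂/dt = B(t) β̇.
   Differentiating B(t) Z(t) yields B(t) applied to the tangential part of Ż
   plus a frame term, which the equations for S and q make normal at β̂(t);
   dually, the derivative of C(t) Z(t) is C(t) applied to the normal part of Ż
   plus a frame term that the equations for T and q make tangent.  So the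
   tangential (resp. normal) part of the derivative vanishes iff Ż is normal
   (resp. tangent), i.e. iff Z is parallel in the flat space T_X St. *)

(** * Derivatives relative to a set *)

Section DerivIn.
Variables (R : realType) (I : set R).

Definition quotient_filter (t : R) : set_system R :=
  within (fun h : R => I (t + h)) (0 : R)^'.

(* At an isolated point of [I] the difference-quotient filter is trivial and
   every value is a derivative. *)
Definition isolated_in (t : R) : Prop := quotient_filter t set0.

Lemma has_deriv_in_isolated t f d : isolated_in t -> has_deriv_in I f t d.
Proof. by move=> t_iso A _; apply: filterS t_iso. Qed.

Lemma has_deriv_in_unique t f d1 d2 : ~ isolated_in t ->
  has_deriv_in I f t d1 -> has_deriv_in I f t d2 -> d1 = d2.
Proof.
move=> t_acc f_d1 f_d2.
have : ProperFilter (quotient_filter t).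
  by constructor; [exact: t_acc | exact: within_filter].
by move=> PF; exact: (norm_cvg_unique f_d1 f_d2).
Qed.

Lemma near_quotient_filter_nz t : \forall h \near quotient_filter t, h != 0.
Proof. exact: cvg_within (nbhs_dnbhs_neq (0 : R)). Qed.

Lemma has_deriv_in_cst t (c : R) : has_deriv_in I (fun=> c) t 0.
Proof.
rewrite /has_deriv_in subrr.
by under eq_fun do rewrite mulr0; exact: cvg_cst.
Qed.

Lemma has_deriv_inD t f g df dg : has_deriv_in I f t df -> has_deriv_in I g t dg ->
  has_deriv_in I (fun s => f s + g s) t (df + dg).
Proof.
move=> f_df g_dg; rewrite /has_deriv_in.
under eq_fun do rewrite opprD addrACA mulrDr.
exact: cvgD.
Qed.

Lemma has_deriv_inZ t (c : R) f df : has_deriv_in I f t df ->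
  has_deriv_in I (fun s => c * f s) t (c * df).
Proof.
move=> f_df; rewrite /has_deriv_in.
under eq_fun do rewrite -mulrBr mulrCA.
exact: cvgMr.
Qed.

Lemma has_deriv_in_cvg t g dg : has_deriv_in I g t dg ->
  (fun h => g (t + h)) @ quotient_filter t --> g t.
Proof.
move=> g_dg.
have : (fun h => g t + h * (h^-1 * (g (t + h) - g t))) @ quotient_filter t
    --> g t + 0 * dg.
  apply: cvgD; first exact: cvg_cst.
  apply: cvgM g_dg; apply: cvg_trans (cvg_within (F := (0 : R)^') _) _.
  exact: cvg_within.
rewrite mul0r addr0; apply: cvg_trans; apply: near_eq_cvg.
near=> h; have h_nz : h != 0 by near: h; exact: near_quotient_filter_nz.
by rewrite mulrA mulfV // mul1r addrC subrK.
Unshelve. all: by end_near.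
Qed.

Lemma has_deriv_inM t f g df dg : has_deriv_in I f t df -> has_deriv_in I g t dg ->
  has_deriv_in I (fun s => f s * g s) t (df * g t + f t * dg).
Proof.
move=> f_df g_dg; have g_cont := has_deriv_in_cvg g_dg.
rewrite /has_deriv_in.
have -> : (fun h => h^-1 * (f (t + h) * g (t + h) - f t * g t)) =
  (fun h => h^-1 * (f (t + h) - f t) * g (t + h) + f t * (h^-1 * (g (t + h) - g t))).
  by apply: funext => h; ring.
by apply: cvgD; [exact: cvgM | exact: cvgMr].
Qed.

Lemma has_deriv_in_sum (J : Type) (r : seq J) t (f : J -> R -> R) (df : J -> R) :
  (forall j, has_deriv_in I (f j) t (df j)) ->
  has_deriv_in I (fun s => \sum_(j <- r) f j s) t (\sum_(j <- r) df j).
Proof.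
move=> f_df; elim: r => [|a r IHr].
  by under eq_fun do rewrite big_nil; rewrite big_nil; exact: has_deriv_in_cst.
by under eq_fun do rewrite big_cons; rewrite big_cons; exact: has_deriv_inD (f_df a) IHr.
Qed.

Lemma eq_has_deriv_in t f g d : I t -> {in I, f =1 g} ->
  has_deriv_in I f t d -> has_deriv_in I g t d.
Proof.
move=> It fg; apply: cvg_trans; apply: near_eq_cvg.
near=> h; have Ith : I (t + h) by near: h; exact: near_withinT.
by rewrite !fg ?inE.
Unshelve. all: by end_near.
Qed.

End DerivIn.

Section MxDerivIn.
Variables (R : realType) (I : set R).
Variables m p : nat.
Implicit Types (F G : R -> 'M[R]_(m, p)) (t : R).

Lemma mx_deriv_in_isolated t F D : isolated_in I t -> mx_deriv_in I F t D.
Proof. by move=> t_iso i j; exact: has_deriv_in_isolated. Qed.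

Lemma mx_deriv_in_unique t F D1 D2 : ~ isolated_in I t ->
  mx_deriv_in I F t D1 -> mx_deriv_in I F t D2 -> D1 = D2.
Proof.
move=> t_acc F_D1 F_D2; apply/matrixP => i j.
exact: has_deriv_in_unique t_acc (F_D1 i j) (F_D2 i j).
Qed.

Lemma mx_deriv_in_cst t (A : 'M[R]_(m, p)) : mx_deriv_in I (fun=> A) t 0.
Proof. by move=> i j; rewrite mxE; exact: has_deriv_in_cst. Qed.

Lemma mx_deriv_inD t F G DF DG : mx_deriv_in I F t DF -> mx_deriv_in I G t DG ->
  mx_deriv_in I (fun s => F s + G s) t (DF + DG).
Proof.
move=> F_DF G_DG i j; rewrite mxE.
have -> : (fun s => (F s + G s) i j) = (fun s => F s i j + G s i j).
  by apply: funext => s; rewrite mxE.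
exact: has_deriv_inD.
Qed.

Lemma mx_deriv_inZ t (c : R) F DF : mx_deriv_in I F t DF ->
  mx_deriv_in I (fun s => c *: F s) t (c *: DF).
Proof.
move=> F_DF i j; rewrite mxE.
have -> : (fun s => (c *: F s) i j) = (fun s => c * F s i j).
  by apply: funext => s; rewrite mxE.
exact: has_deriv_inZ.
Qed.

Lemma mx_deriv_inB t F G DF DG : mx_deriv_in I F t DF -> mx_deriv_in I G t DG ->
  mx_deriv_in I (fun s => F s - G s) t (DF - DG).
Proof.
move=> F_DF /(mx_deriv_inZ (c := -1)); rewrite scaleN1r.
under eq_fun do rewrite scaleN1r.
exact: mx_deriv_inD.
Qed.

Lemma mx_deriv_in_tr t F DF : mx_deriv_in I F t DF ->
  mx_deriv_in I (fun s => (F s)^T) t DF^T.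
Proof.
move=> F_DF i j; rewrite mxE.
have -> : (fun s => (F s)^T i j) = (fun s => F s j i).
  by apply: funext => s; rewrite mxE.
exact: F_DF.
Qed.

Lemma mx_deriv_inM q t F (G : R -> 'M[R]_(p, q)) DF DG :
  mx_deriv_in I F t DF -> mx_deriv_in I G t DG ->
  mx_deriv_in I (fun s => F s *m G s) t (DF *m G t + F t *m DG).
Proof.
move=> F_DF G_DG i j; rewrite !mxE -big_split /=.
have -> : (fun s => (F s *m G s) i j) = (fun s => \sum_l F s i l * G s l j).
  by apply: funext => s; rewrite mxE.
by apply: has_deriv_in_sum => l; exact: has_deriv_inM.
Qed.

Lemma eq_mx_deriv_in t F G D : I t -> {in I, F =1 G} ->
  mx_deriv_in I F t D -> mx_deriv_in I G t D.
Proof.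
move=> It FG F_D i j; apply: eq_has_deriv_in It _ (F_D i j).
by move=> s Is; rewrite FG.
Qed.

End MxDerivIn.

Section LinearMx.
Variables (R : realType) (m p a b : nat).

Lemma linear_sum_delta (f : 'M[R]_(m, p) -> 'M[R]_(a, b)) : linear f ->
  forall V, f V = \sum_i \sum_j V i j *: f (delta_mx i j).
Proof.
move=> f_lin V.
have f0 : f 0 = 0.
  have := f_lin 1 0 0; rewrite scaler0 addr0 scale1r => f00.
  by apply: (addrI (f 0)); rewrite addr0 -f00.
have fD u v : f (u + v) = f u + f v by have := f_lin 1 u v; rewrite !scale1r.
rewrite {1}(matrix_sum_delta V) (big_morph f fD f0); apply: eq_bigr => i _.
rewrite (big_morph f fD f0); apply: eq_bigr => j _.
by rewrite -[_ *: _]addr0 f_lin f0 addr0.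
Qed.

Variable I : set R.

(* Expand [Z s] in the basis [delta_mx i j] and differentiate termwise. *)
Lemma mx_deriv_in_linear_family t (M : R -> 'M[R]_(m, p) -> 'M[R]_(a, b))
    (Z : R -> 'M[R]_(m, p)) DZ (DM : 'I_m -> 'I_p -> 'M[R]_(a, b)) :
  I t -> (forall s, I s -> linear (M s)) -> mx_deriv_in I Z t DZ ->
  (forall i j, mx_deriv_in I (fun s => M s (delta_mx i j)) t (DM i j)) ->
  mx_deriv_in I (fun s => M s (Z s)) t (M t DZ + \sum_i \sum_j Z t i j *: DM i j).
Proof.
move=> It M_lin Z_DZ M_DM.
apply: (eq_mx_deriv_in (F := fun s => \sum_i \sum_j Z s i j *: M s (delta_mx i j))) (It) _ _.
  by move=> s /set_mem Is; rewrite (linear_sum_delta (M_lin s Is) (Z s)).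
move=> x y.
have -> : (M t DZ + \sum_i \sum_j Z t i j *: DM i j) x y =
    \sum_i \sum_j (DZ i j * M t (delta_mx i j) x y + Z t i j * DM i j x y).
  rewrite (linear_sum_delta (M_lin t It) DZ) mxE !summxE -big_split /=.
  apply: eq_bigr => i _; rewrite !summxE -big_split /=.
  by apply: eq_bigr => j _; rewrite !mxE.
have -> : (fun s => (\sum_i \sum_j Z s i j *: M s (delta_mx i j)) x y) =
    (fun s => \sum_i \sum_j Z s i j * M s (delta_mx i j) x y).
  apply: funext => s; rewrite summxE; apply: eq_bigr => i _.
  by rewrite summxE; apply: eq_bigr => j _; rewrite mxE.
apply: has_deriv_in_sum => i; apply: has_deriv_in_sum => j.
exact: has_deriv_inM (Z_DZ i j) (M_DM i j x y).
Qed.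

Lemma mx_deriv_in_kernel t (f : 'M[R]_(m, p) -> 'M[R]_(a, b)) Z D :
  I t -> ~ isolated_in I t -> linear f -> (forall s, I s -> f (Z s) = 0) ->
  mx_deriv_in I Z t D -> f D = 0.
Proof.
move=> It t_acc f_lin fZ0 Z_D.
have := mx_deriv_in_linear_family (M := fun=> f) It (fun _ _ => f_lin) Z_D
  (fun i j => mx_deriv_in_cst I t (f (delta_mx i j))).
have -> : f D + \sum_i \sum_j Z t i j *: (0 : 'M[R]_(a, b)) = f D.
  by rewrite big1 ?addr0 // => i _; rewrite big1 // => j _; rewrite scaler0.
move/(mx_deriv_in_unique t_acc); apply.
by apply: eq_mx_deriv_in It _ (mx_deriv_in_cst I t 0) => s /set_mem Is; rewrite fZ0.
Qed.

End LinearMx.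

Lemma choose_mx_deriv_in (R : realType) (I : set R) m p (Z : R -> 'M[R]_(m, p))
    (P : R -> 'M[R]_(m, p) -> Prop) :
  (forall t, I t -> P t 0) ->
  (forall t, I t -> ~ isolated_in I t -> exists2 D, mx_deriv_in I Z t D & P t D) ->
  exists D : R -> 'M[R]_(m, p),
    (forall t, I t -> mx_deriv_in I Z t (D t)) /\ (forall t, I t -> P t (D t)).
Proof.
move=> P0 Z_P.
have : forall t, exists D, I t -> mx_deriv_in I Z t D /\ P t D.
  move=> t; have [It|nIt] := pselect (I t); last by exists 0.
  have [t_iso|t_acc] := pselect (isolated_in I t).
    by exists 0 => _; split; [exact: mx_deriv_in_isolated | exact: P0].
  by have [D Z_D PD] := Z_P t It t_acc; exists D.
case/choice => D hD.
by exists D; split => t It; case: (hD t It).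
Qed.

(** * The Euclidean metric and the Stiefel manifold *)

Section Transpose.
Variables (R : pzRingType) (m p : nat).
Implicit Types A B : 'M[R]_(m, p).

Lemma trmxD A B : (A + B)^T = A^T + B^T.
Proof. by apply/matrixP => i j; rewrite !mxE. Qed.

Lemma trmxN A : (- A)^T = - A^T.
Proof. by apply/matrixP => i j; rewrite !mxE. Qed.

Lemma trmxB A B : (A - B)^T = A^T - B^T.
Proof. by rewrite trmxD trmxN. Qed.

Lemma trmxZ a A : (a *: A)^T = a *: A^T.
Proof. by apply/matrixP => i j; rewrite !mxE. Qed.

Lemma mxtraceN (M : 'M[R]_m) : \tr (- M) = - \tr M.
Proof. exact: raddfN. Qed.

Lemma mxtraceB (M N : 'M[R]_m) : \tr (M - N) = \tr M - \tr N.
Proof. exact: raddfB. Qed.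

End Transpose.

Ltac entrywise := apply/matrixP => ? ?; rewrite !mxE; field; try done.
Ltac trmx_simpl := repeat progress rewrite ?trmxD ?trmxB ?trmxN ?trmxZ ?trmx_mul ?trmxK.
Ltac mulmx_simpl := repeat progress rewrite ?mulmxDl ?mulmxDr ?mulmxBl ?mulmxBr
  ?mulmxN ?mulNmx -?mulmxA -?scalemxAl -?scalemxAr ?mulmx1 ?mul1mx ?mulmx0 ?mul0mx.

Lemma mxtrace_mulTmx_eq0 (R : realDomainType) m p (A : 'M[R]_(m, p)) :
  \tr (A^T *m A) = 0 -> A = 0.
Proof.
rewrite /mxtrace; under eq_bigr do rewrite mxE.
move=> /psumr_eq0P sum0; apply/matrixP => j i; rewrite mxE.
have sq_ge0 (l : 'I_m) : 0 <= A^T i l * A l i by rewrite mxE -expr2 sqr_ge0.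
have /psumr_eq0P col0 : \sum_l A^T i l * A l i = 0.
  by apply: sum0 => // i' _; apply: sumr_ge0 => l _; rewrite mxE -expr2 sqr_ge0.
have /eqP := col0 (fun l _ => sq_ge0 l) j isT.
by rewrite mxE mulf_eq0 orbb => /eqP.
Qed.

Section Euclidean.
Variables (R : realType) (n k : nat).
Implicit Types (V W Y : 'M[R]_(n, k)).

Lemma eucl_eq0 V : eucl V V = 0 -> V = 0.
Proof. by rewrite /eucl => /eqP; rewrite mulf_eq0 pnatr_eq0 /= => /eqP /mxtrace_mulTmx_eq0. Qed.

Lemma eucl0r V : eucl V 0 = 0.
Proof. by rewrite /eucl mulmx0 mxtrace0 mulr0. Qed.

Lemma eucl_linear V : linear (eucl V).
Proof. by move=> a W1 W2; rewrite /eucl mulmxDr -scalemxAr mxtraceD mxtraceZ mulrDr mulrCA. Qed.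

Lemma isometry_eq0 (f : 'M[R]_(n, k) -> 'M[R]_(n, k)) V :
  eucl (f V) (f V) = eucl V V -> (f V = 0 <-> V = 0).
Proof.
move=> f_iso; split => [fV0|V0]; apply: eucl_eq0; first by rewrite -f_iso fV0 eucl0r.
by rewrite f_iso V0 eucl0r.
Qed.

Lemma TSt0 Y : TSt Y 0.
Proof. by rewrite /TSt /= mulmx0 trmx0 mul0mx addr0. Qed.

Lemma NSt0 Y : NSt Y 0.
Proof. by move=> V _; rewrite eucl0r. Qed.

Lemma TSt_lin Y a V W : TSt Y V -> TSt Y W -> TSt Y (a *: V + W).
Proof.
rewrite /TSt /= => YV YW; trmx_simpl.
by rewrite mulmxDr mulmxDl -scalemxAr -scalemxAl addrACA -scalerDr YV YW scaler0 addr0.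
Qed.

Lemma NSt_lin Y a V W : NSt Y V -> NSt Y W -> NSt Y (a *: V + W).
Proof. by move=> YV YW U YU; rewrite eucl_linear YV // YW // scaler0 addr0. Qed.

Lemma TStB Y V W : TSt Y V -> TSt Y W -> TSt Y (V - W).
Proof. by move=> YV YW; rewrite -scaleN1r addrC; exact: TSt_lin. Qed.

Lemma NStB Y V W : NSt Y V -> NSt Y W -> NSt Y (V - W).
Proof. by move=> YV YW; rewrite -scaleN1r addrC; exact: NSt_lin. Qed.

Lemma TSt_NSt_eq0 Y V : TSt Y V -> NSt Y V -> V = 0.
Proof. by move=> YV /(_ V YV); exact: eucl_eq0. Qed.

End Euclidean.

Lemma TSt_deriv (R : realType) n k (I : set R) (Y : 'M[R]_(n, k)) Z t D :
  I t -> ~ isolated_in I t -> (forall s, I s -> TSt Y (Z s)) ->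
  mx_deriv_in I Z t D -> TSt Y D.
Proof.
move=> It t_acc YZ Z_D; apply: (mx_deriv_in_kernel (f := fun V => Y^T *m V + V^T *m Y)) Z_D => //.
by move=> a V W; trmx_simpl; mulmx_simpl; entrywise.
Qed.

Definition Ptan (R : realType) n k (X V : 'M[R]_(n, k)) : 'M[R]_(n, k) := V - Pperp X V.

(* The differential at the identity of the action (Q, Th) |-> Q X Th^T. *)
Definition inf_act (R : realType) n k (X : 'M[R]_(n, k)) (x : gT R n k) : 'M[R]_(n, k) :=
  x.1 *m X - X *m x.2.

Section Projections.
Variables (R : realType) (n k : nat) (X : 'M[R]_(n, k)).

Lemma Pperp_linear : linear (Pperp X).
Proof. by move=> a V W; rewrite /Pperp; trmx_simpl; mulmx_simpl; entrywise. Qed.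

Lemma Ptan_linear : linear (Ptan X).
Proof. by move=> a V W; rewrite /Ptan Pperp_linear; entrywise. Qed.

Lemma inf_act_lin a (x y : gT R n k) :
  inf_act X (gadd (gscale a x) y) = a *: inf_act X x + inf_act X y.
Proof. by rewrite /inf_act /=; mulmx_simpl; entrywise. Qed.

Lemma inf_act_scale a (x : gT R n k) : inf_act X (gscale a x) = a *: inf_act X x.
Proof. by rewrite /inf_act /=; mulmx_simpl; entrywise. Qed.

Lemma pvec_lin a V W :
  pvec X (a *: V + W) = gadd (gscale a (pvec X V)) (pvec X W).
Proof. by rewrite /pvec /=; congr pair; trmx_simpl; mulmx_simpl; entrywise. Qed.

Lemma gad_lin (xi : gT R n k) a x y :
  gad xi (gadd (gscale a x) y) = gadd (gscale a (gad xi x)) (gad xi y).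
Proof. by rewrite /gad /=; congr pair; mulmx_simpl; entrywise. Qed.

End Projections.

Section StiefelPoint.
Variables (R : realType) (n k : nat) (X : 'M[R]_(n, k)).
Hypothesis XtX : X^T *m X = 1%:M.
Implicit Types (V W : 'M[R]_(n, k)) (x y : gT R n k).

Let XtXl m (M : 'M[R]_(k, m)) : X^T *m (X *m M) = M.
Proof. by rewrite mulmxA XtX mul1mx. Qed.

Lemma TSt_trmx_mul V : TSt X V -> V^T *m X = - (X^T *m V).
Proof. by rewrite /TSt /= => /eqP; rewrite addr_eq0 => /eqP ->; rewrite opprK. Qed.

Let TSt_trmx_mulA V m (M : 'M[R]_(k, m)) : TSt X V ->
  V^T *m (X *m M) = - (X^T *m (V *m M)).
Proof. by move=> XV; rewrite mulmxA (TSt_trmx_mul XV) mulNmx mulmxA. Qed.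

Lemma NSt_mul_sym (M : 'M[R]_k) : M^T = M -> NSt X (X *m M).
Proof.
move=> M_sym U XU; rewrite /eucl mulmxA.
set P := U^T *m X.
have P_skew : P^T = - P by rewrite /P trmx_mul trmxK (TSt_trmx_mul XU) opprK.
have : \tr (P *m M) = - \tr (P *m M).
  by rewrite -{1}mxtrace_tr trmx_mul M_sym P_skew mulmxN mxtraceN mxtrace_mulC.
by lra.
Qed.

Lemma Ptan_TSt V : TSt X (Ptan X V).
Proof. by rewrite /TSt /Ptan /Pperp /=; trmx_simpl; mulmx_simpl; rewrite ?XtXl ?XtX ?mulmx1; entrywise. Qed.

Lemma Pperp_NSt V : NSt X (Pperp X V).
Proof. by rewrite /Pperp scalemxAr; apply: NSt_mul_sym; trmx_simpl; rewrite addrC. Qed.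

Lemma Pperp_eq0 V : Pperp X V = 0 <-> TSt X V.
Proof.
rewrite /Pperp /TSt /=; split => [P0|->]; last by rewrite mulmx0 scaler0.
have := congr1 (fun M => 2%:R *: (X^T *m M)) P0.
by rewrite -scalemxAr XtXl scalerA mulfV ?pnatr_eq0 // scale1r mulmx0 scaler0.
Qed.

Lemma Ptan_eq0 V : Ptan X V = 0 <-> NSt X V.
Proof.
split => [/eqP|XV]; first by rewrite subr_eq0 => /eqP ->; exact: Pperp_NSt.
by apply: (TSt_NSt_eq0 (Ptan_TSt V)); apply: NStB XV (Pperp_NSt V).
Qed.

Lemma Ptan_id V : TSt X V -> Ptan X V = V.
Proof. by move=> /Pperp_eq0 XV; rewrite /Ptan XV subr0. Qed.

Lemma Pperp_id V : NSt X V -> Pperp X V = V.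
Proof. by move=> /Ptan_eq0 /eqP; rewrite subr_eq0 => /eqP. Qed.

Lemma pvec_p V : TSt X V -> p_sub X (pvec X V).
Proof.
move=> XV; split.
  split; rewrite /Defs.skew /pvec /=; first by trmx_simpl; rewrite opprB.
  by rewrite trmx_mul trmxK (TSt_trmx_mul XV).
move=> [y1 y2] [[y1_skew y2_skew] /= y_stab]; rewrite /ginner /pvec /=.
have Xy1 : X^T *m y1 = y2 *m X^T.
  apply: trmx_inj; rewrite !trmx_mul trmxK y1_skew y2_skew mulmxN mulNmx y_stab.
  by apply/eqP; rewrite eqr_opp.
have e1 : \tr (V *m X^T *m y1) = \tr (X^T *m V *m y2).
  by rewrite -[in LHS]mulmxA Xy1 [in LHS]mulmxA [in LHS]mxtrace_mulC mulmxA.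
have e2 : \tr (X *m V^T *m y1) = - \tr (X^T *m V *m y2).
  rewrite -[in LHS]mulmxA [in LHS]mxtrace_mulC -[in LHS]mulmxA y_stab.
  by rewrite [in LHS]mulmxA (TSt_trmx_mul XV) mulNmx mxtraceN.
by rewrite mulmxBl mxtraceB e1 e2; ring.
Qed.

Lemma inf_act_TSt x : g_sub x -> TSt X (inf_act X x).
Proof.
case=> x1_skew x2_skew; rewrite /TSt /inf_act /=.
by trmx_simpl; rewrite x1_skew x2_skew; mulmx_simpl; rewrite ?XtXl ?XtX ?mulmx1; entrywise.
Qed.

Lemma inf_act_pvec V : TSt X V -> inf_act X (pvec X V) = V.
Proof.
move=> XV; rewrite /inf_act /pvec /=.
by mulmx_simpl; rewrite ?XtXl ?XtX ?mulmx1 (TSt_trmx_mul XV); mulmx_simpl; entrywise.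
Qed.

Lemma inf_act_prp x : inf_act X (prp X x) = inf_act X x.
Proof. by rewrite /inf_act /prp /=; mulmx_simpl; rewrite ?XtXl ?XtX ?mulmx1; entrywise. Qed.

Lemma ginner_pvec V W : TSt X V -> TSt X W -> ginner (pvec X V) (pvec X W) = eucl V W.
Proof.
move=> XV XW; rewrite /ginner /pvec /eucl /=.
rewrite mulmxBl !mulmxBr !mxtraceB.
have -> : \tr (V *m X^T *m (W *m X^T)) = \tr (X^T *m V *m (X^T *m W)).
  by rewrite !mulmxA mxtrace_mulC !mulmxA.
have -> : \tr (V *m X^T *m (X *m W^T)) = \tr (V^T *m W).
  by rewrite -mulmxA XtXl -mxtrace_tr trmx_mul trmxK mxtrace_mulC.
have -> : \tr (X *m V^T *m (W *m X^T)) = \tr (V^T *m W).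
  by rewrite !mulmxA mxtrace_mulC !mulmxA XtX mul1mx.
have -> : \tr (X *m V^T *m (X *m W^T)) = \tr (X^T *m V *m (X^T *m W)).
  rewrite !mulmxA mxtrace_mulC !mulmxA (TSt_trmx_mul XW) -(mulmxA _ V^T X).
  by rewrite (TSt_trmx_mul XV) mulNmx mulmxN opprK [LHS]mxtrace_mulC !mulmxA.
ring.
Qed.

(* An element of h pairing with y to |y.1|^2: this is what makes [inf_act X]
   injective on p = h^perp. *)
Let stab_witness y : g_sub y -> y.1 *m X = X *m y.2 ->
  h_sub X (y.1 - 2%:R *: (X *m y.2 *m X^T), - y.2) /\
  ginner y (y.1 - 2%:R *: (X *m y.2 *m X^T), - y.2) = \tr (y.1^T *m y.1).
Proof.
case: y => y1 y2 [/= y1_skew y2_skew] /= y_stab; split.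
  split; first split; rewrite /Defs.skew /=.
  - by trmx_simpl; rewrite y1_skew y2_skew; mulmx_simpl; entrywise.
  - by rewrite trmxN y2_skew.
  - by rewrite mulmxBl y_stab; mulmx_simpl; rewrite ?XtX ?mulmx1; entrywise.
rewrite /ginner /= y1_skew mulmxBr mulNmx mxtraceB mxtraceN -scalemxAr mxtraceZ.
have -> : \tr (y1 *m (X *m y2 *m X^T)) = \tr (y2 *m y2).
  by rewrite mulmxA mxtrace_mulC (mulmxA y1) y_stab !mulmxA XtX mul1mx.
by rewrite mulmxN !mxtraceN; ring.
Qed.

Lemma pvec_inf_act x : p_sub X x -> pvec X (inf_act X x) = x.
Proof.
move=> [[x1_skew x2_skew] x_perp].
have XV : TSt X (inf_act X x) by exact: inf_act_TSt.
have [[w1_skew w2_skew] w_perp] := pvec_p XV.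
have w_inf : inf_act X (pvec X (inf_act X x)) = inf_act X x by exact: inf_act_pvec.
set w := pvec X _ in w1_skew w2_skew w_perp w_inf *.
clearbody w; rewrite /Defs.skew in x1_skew x2_skew w1_skew w2_skew.
set y : gT R n k := (x.1 - w.1, x.2 - w.2).
have y_g : g_sub y.
  by split; rewrite /Defs.skew /= trmxB ?x1_skew ?w1_skew ?x2_skew ?w2_skew opprD opprK.
have y_stab : y.1 *m X = X *m y.2.
  apply/eqP; rewrite -subr_eq0; apply/eqP.
  have -> : y.1 *m X - X *m y.2 = inf_act X x - inf_act X w.
    by rewrite /inf_act /= mulmxBl mulmxBr; entrywise.
  by rewrite w_inf subrr.
have [y'_h y'_norm] := stab_witness y_g y_stab.
set y' := (_, _) in y'_h y'_norm.
have y1_0 : y.1 = 0.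
  apply: mxtrace_mulTmx_eq0; rewrite -y'_norm.
  have -> : ginner y y' = ginner x y' - ginner w y'.
    by rewrite /ginner /= !mulmxBl !mxtraceB; ring.
  by rewrite x_perp // w_perp // subrr.
have y2_0 : y.2 = 0 by rewrite -[y.2]XtXl -y_stab y1_0 mul0mx mulmx0.
apply: injective_projections; apply/eqP; rewrite eq_sym -subr_eq0; apply/eqP.
  exact: y1_0.
exact: y2_0.
Qed.

(* The identity behind the normality of the frame derivative: with V, W the
   tangent vectors of xi, eta, the expression equals X (- (V^T W + W^T V) / 2). *)
Lemma frame_derivative_NSt xi eta : p_sub X xi -> p_sub X eta ->
  NSt X (xi.1 *m inf_act X eta - inf_act X eta *m xi.2 - 2^-1 *: inf_act X (gad xi eta)).
Proof.
move=> xi_p eta_p.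
have XV : TSt X (inf_act X xi) by apply: inf_act_TSt; case: xi_p.
have XW : TSt X (inf_act X eta) by apply: inf_act_TSt; case: eta_p.
rewrite -(pvec_inf_act xi_p) -(pvec_inf_act eta_p) inf_act_pvec //.
move: (inf_act X xi) (inf_act X eta) XV XW => V W XV XW.
have -> : (pvec X V).1 *m W - W *m (pvec X V).2 -
    2^-1 *: inf_act X (gad (pvec X V) (pvec X W)) =
    X *m (- 2^-1 *: (V^T *m W + W^T *m V)).
  rewrite /pvec /inf_act /gad /=.
  do 3! (mulmx_simpl; rewrite ?XtXl ?XtX ?(TSt_trmx_mulA _ XV) ?(TSt_trmx_mul XV)
    ?(TSt_trmx_mulA _ XW) ?(TSt_trmx_mul XW)).
  by entrywise.
by apply: NSt_mul_sym; trmx_simpl; entrywise.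
Qed.

End StiefelPoint.

(** * The action of O(n) x O(k) *)

Definition act (R : realType) n k (Q : 'M[R]_n) (Th : 'M[R]_k) (V : 'M[R]_(n, k)) :
  'M[R]_(n, k) := Q *m V *m Th^T.

Lemma act_linear (R : realType) n k (Q : 'M[R]_n) (Th : 'M[R]_k) : linear (act Q Th).
Proof. by move=> a V W; rewrite /act mulmxDr mulmxDl -scalemxAr -scalemxAl. Qed.

Section Action.
Variables (R : realType) (n k : nat) (Q : 'M[R]_n) (Th : 'M[R]_k).
Hypotheses (Q_orth : orthmx Q) (Th_orth : orthmx Th).
Implicit Types (Y V W : 'M[R]_(n, k)).

Let QQt : Q *m Q^T = 1%:M. Proof. exact: mulmx1C. Qed.
Let ThTht : Th *m Th^T = 1%:M. Proof. exact: mulmx1C. Qed.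

Let cancel1 p q m (A : 'M[R]_(p, q)) (B : 'M[R]_(q, p)) (C : 'M[R]_(p, m)) :
  A *m B = 1%:M -> A *m (B *m C) = C.
Proof. by move=> AB; rewrite mulmxA AB mul1mx. Qed.

Ltac cancel_orth := do 3! (mulmx_simpl; rewrite ?(cancel1 _ Q_orth) ?(cancel1 _ Th_orth)
  ?(cancel1 _ QQt) ?(cancel1 _ ThTht) ?Q_orth ?Th_orth ?QQt ?ThTht ?mulmx1).

Lemma act_eucl V W : eucl (act Q Th V) (act Q Th W) = eucl V W.
Proof. by rewrite /eucl /act; trmx_simpl; cancel_orth; rewrite mxtrace_mulC; cancel_orth. Qed.

Lemma act_TSt Y V : TSt Y V -> TSt (act Q Th Y) (act Q Th V).
Proof.
rewrite /TSt /act /= => YV; trmx_simpl; cancel_orth.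
have -> : Th *m (Y^T *m (V *m Th^T)) + Th *m (V^T *m (Y *m Th^T)) =
    Th *m ((Y^T *m V + V^T *m Y) *m Th^T) by mulmx_simpl.
by rewrite YV mul0mx mulmx0.
Qed.

Lemma act_Stiefel Y : Stiefel Y -> Stiefel (act Q Th Y).
Proof. by rewrite /Stiefel /act /= => YtY; trmx_simpl; cancel_orth; rewrite (cancel1 _ YtY); cancel_orth. Qed.

Lemma actK V : act Q^T Th^T (act Q Th V) = V.
Proof. by rewrite /act trmxK; cancel_orth. Qed.

End Action.

Lemma orthmx_tr (R : realType) n (Q : 'M[R]_n) : orthmx Q -> orthmx Q^T.
Proof. by rewrite /orthmx trmxK; exact: mulmx1C. Qed.

Lemma act_NSt (R : realType) n k (Q : 'M[R]_n) (Th : 'M[R]_k) (Y W : 'M[R]_(n, k)) :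
  orthmx Q -> orthmx Th -> NSt Y W -> NSt (act Q Th Y) (act Q Th W).
Proof.
move=> Q_orth Th_orth YW V YV.
have Q'_orth := orthmx_tr Q_orth; have Th'_orth := orthmx_tr Th_orth.
rewrite -[V](actK Q'_orth Th'_orth) !trmxK act_eucl //.
by apply: YW; rewrite -[Y](actK Q_orth Th_orth); exact: act_TSt.
Qed.

(** * Rolling *)

Section ParallelTransfer.
Variables (R : realType) (n k : nat) (I : set R).
Variables (TM NM TMh NMh : 'M[R]_(n, k) -> set 'M[R]_(n, k)) (c ch : R -> 'M[R]_(n, k)).
Hypothesis NM0 : forall t, I t -> NM (c t) 0.
Hypothesis NMh0 : forall t, I t -> NMh (ch t) 0.
Hypothesis NMhB : forall t V W, I t -> NMh (ch t) V -> NMh (ch t) W -> NMh (ch t) (V - W).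
Hypothesis TMh_NMh_eq0 : forall t V, I t -> TMh (ch t) V -> NMh (ch t) V -> V = 0.

Lemma tparallel_transfer (Z W : R -> 'M[R]_(n, k)) :
  (forall t, I t -> TM (c t) (Z t)) -> (forall t, I t -> TMh (ch t) (W t)) ->
  mx_differentiable_in I Z ->
  (forall t D, I t -> ~ isolated_in I t -> mx_deriv_in I Z t D ->
     exists E K, [/\ mx_deriv_in I W t (E + K), NMh (ch t) E, TMh (ch t) K
                   & K = 0 <-> NM (c t) D]) ->
  tparallel I TMh NMh ch W <-> tparallel I TM NM c Z.
Proof.
move=> Z_TM W_TMh [DZ Z_DZ] split_DW; split.
- case=> _ [DW [W_DW DW_NMh]]; split => //.
  apply: (choose_mx_deriv_in (P := fun t => NM (c t))) => // t It t_acc.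
  exists (DZ t); first exact: Z_DZ.
  have [E [K [W_EK E_NMh K_TMh K0]]] := split_DW t _ It t_acc (Z_DZ t It).
  apply/K0; apply: TMh_NMh_eq0 (It) K_TMh _.
  rewrite -(addKr E K) addrC -(mx_deriv_in_unique t_acc (W_DW t It) W_EK).
  exact: NMhB It (DW_NMh t It) E_NMh.
- case=> _ [D [Z_D D_NM]]; split => //.
  apply: (choose_mx_deriv_in (P := fun t => NMh (ch t))) => // t It t_acc.
  have [E [K [W_EK E_NMh K_TMh K0]]] := split_DW t _ It t_acc (Z_D t It).
  by exists (E + K) => //; rewrite (proj2 K0 (D_NM t It)) addr0.
Qed.

End ParallelTransfer.

Section Rolling.
Variables (R : realType) (n k : nat) (I : set R) (X : 'M[R]_(n, k)).
Hypothesis XtX : X^T *m X = 1%:M.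
Variables (beta dbeta : R -> 'M[R]_(n, k)).
Hypothesis beta_TSt : forall t, I t -> TSt X (beta t).
Hypothesis beta_D : forall t, I t -> mx_deriv_in I beta t (dbeta t).
Variables (S : R -> gT R n k -> gT R n k) (Rq : R -> 'M[R]_n) (th : R -> 'M[R]_k).
Variable T : R -> 'M[R]_(n, k) -> 'M[R]_(n, k).

Local Notation xi t := (S t (pvec X (dbeta t))).
Local Notation betah t := (act (Rq t) (th t) X).

Hypothesis S_Op : forall t, I t -> Op X (S t).
Hypothesis S_D : forall t w, I t -> p_sub X w ->
  g_deriv_in I (fun s => S s w) t (gscale (- 2^-1) (prp X (gad (xi t) (S t w)))).
Hypothesis q_orth : forall t, I t -> orthmx (Rq t) /\ orthmx (th t).
Hypothesis Rq_D : forall t, I t -> mx_deriv_in I Rq t (Rq t *m (xi t).1).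
Hypothesis th_D : forall t, I t -> mx_deriv_in I th t (th t *m (xi t).2).
Hypothesis T_isom : forall t, I t -> lin_isom (NSt X) (NSt X) (T t).
Hypothesis T_D : forall t W, I t -> NSt X W ->
  mx_deriv_in I (fun s => T s W) t (- Pperp X (fxi (xi t) (T t W))).

Definition B t V := act (Rq t) (th t) (inf_act X (S t (pvec X V))).
Definition C t W := act (Rq t) (th t) (T t W).

(* Extensions of [B t] and [C t] to linear maps on all of 'M_(n, k), so that
   [mx_deriv_in_linear_family] applies. *)
Definition Bext t V := B t (Ptan X V).
Definition Cext t W := C t (Pperp X W).

Let Rq_orth t : I t -> orthmx (Rq t). Proof. by case/q_orth. Qed.
Let th_orth t : I t -> orthmx (th t). Proof. by case/q_orth. Qed.

Lemma S_p t w : I t -> p_sub X w -> p_sub X (S t w).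
Proof. by move=> /S_Op[Sp _ _]; exact: Sp. Qed.

Lemma S_lin t a w1 w2 : I t -> p_sub X w1 -> p_sub X w2 ->
  S t (gadd (gscale a w1) w2) = gadd (gscale a (S t w1)) (S t w2).
Proof. by move=> /S_Op[_ Slin _]; exact: Slin. Qed.

Lemma S_ginner t w1 w2 : I t -> p_sub X w1 -> p_sub X w2 ->
  ginner (S t w1) (S t w2) = ginner w1 w2.
Proof. by move=> /S_Op[_ _ Siso]; exact: Siso. Qed.

Lemma T_NSt t W : I t -> NSt X W -> NSt X (T t W).
Proof. by move=> /T_isom[TN _ _]; exact: TN. Qed.

Lemma T_lin t a W1 W2 : I t -> NSt X W1 -> NSt X W2 -> T t (a *: W1 + W2) = a *: T t W1 + T t W2.
Proof. by move=> /T_isom[_ Tlin _]; exact: Tlin. Qed.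

Lemma T_eucl t W1 W2 : I t -> NSt X W1 -> NSt X W2 -> eucl (T t W1) (T t W2) = eucl W1 W2.
Proof. by move=> /T_isom[_ _ Tiso]; exact: Tiso. Qed.

Lemma xi_p t : I t -> ~ isolated_in I t -> p_sub X (xi t).
Proof. by move=> It t_acc; apply/S_p/pvec_p => //; exact: TSt_deriv beta_TSt (beta_D It). Qed.

Lemma S_pvec_p t V : I t -> TSt X V -> p_sub X (S t (pvec X V)).
Proof. by move=> It XV; apply/S_p/pvec_p. Qed.

Lemma B_TSt t V : I t -> TSt X V -> TSt (betah t) (B t V).
Proof.
move=> It XV; apply: (act_TSt (th t) (Rq_orth It)).
by apply: inf_act_TSt; case: (S_pvec_p It XV).
Qed.

Lemma B_eucl t V W : I t -> TSt X V -> TSt X W -> eucl (B t V) (B t W) = eucl V W.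
Proof.
move=> It XV XW; rewrite /B (act_eucl (Rq_orth It) (th_orth It)).
have [[gV _] [gW _]] := (S_pvec_p It XV, S_pvec_p It XW).
rewrite -(ginner_pvec XtX (inf_act_TSt XtX gV) (inf_act_TSt XtX gW)).
rewrite (pvec_inf_act XtX (S_pvec_p It XV)) (pvec_inf_act XtX (S_pvec_p It XW)).
by rewrite S_ginner ?ginner_pvec //; apply: pvec_p.
Qed.

Lemma Bext_linear t : I t -> linear (Bext t).
Proof.
move=> It a V W; rewrite /Bext /B Ptan_linear pvec_lin S_lin // ?inf_act_lin ?act_linear //.
all: by apply: pvec_p => //; exact: Ptan_TSt.
Qed.

Lemma B_lin_isom t : I t -> lin_isom (TSt X) (TSt (betah t)) (B t).
Proof.
move=> It; split => [V|a V W XV XW|V W]; [exact: B_TSt | | exact: B_eucl].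
have := Bext_linear It a V W; rewrite /Bext !Ptan_id //; exact: TSt_lin.
Qed.

Lemma C_NSt t W : I t -> NSt X W -> NSt (betah t) (C t W).
Proof. by move=> It XW; apply: act_NSt; [exact: Rq_orth | exact: th_orth | exact: T_NSt]. Qed.

Lemma C_eucl t V W : I t -> NSt X V -> NSt X W -> eucl (C t V) (C t W) = eucl V W.
Proof. by move=> It XV XW; rewrite /C (act_eucl (Rq_orth It) (th_orth It)) T_eucl. Qed.

Lemma Cext_linear t : I t -> linear (Cext t).
Proof.
move=> It a V W; rewrite /Cext /C Pperp_linear T_lin ?act_linear //; exact: Pperp_NSt.
Qed.

Lemma C_lin_isom t : I t -> lin_isom (NSt X) (NSt (betah t)) (C t).
Proof.
move=> It; split => [W|a V W XV XW|V W]; [exact: C_NSt | | exact: C_eucl].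
by rewrite /C T_lin //; exact: act_linear.
Qed.

Lemma betah_deriv t : I t -> mx_deriv_in I (fun s => betah s) t (B t (dbeta t)).
Proof.
move=> It; have [t_iso|t_acc] := pselect (isolated_in I t).
  exact: mx_deriv_in_isolated.
have [_ xi2_skew] := (xi_p It t_acc).1.
have := mx_deriv_inM (mx_deriv_inM (Rq_D It) (mx_deriv_in_cst I t X)) (mx_deriv_in_tr (th_D It)).
congr mx_deriv_in; rewrite /B /act /inf_act trmx_mul xi2_skew.
by move: (xi t).1 (xi t).2 (Rq t) (th t) => x1 x2 Q Th; mulmx_simpl; entrywise.
Qed.

Definition dB t x := act (Rq t) (th t)
  ((xi t).1 *m inf_act X x - inf_act X x *m (xi t).2 - 2^-1 *: inf_act X (gad (xi t) x)).

Definition dC t W := act (Rq t) (th t) (Ptan X (fxi (xi t) W)).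

Lemma dB_lin t a x y : dB t (gadd (gscale a x) y) = a *: dB t x + dB t y.
Proof.
rewrite /dB gad_lin !inf_act_lin -act_linear; congr act.
by move: (inf_act X x) (inf_act X y) (inf_act X (gad _ x)) (inf_act X (gad _ y)) (xi t).1 (xi t).2
  => ? ? ? ? ? ?; mulmx_simpl; entrywise.
Qed.

Lemma dC_linear t : linear (dC t).
Proof.
move=> a V W; rewrite /dC -act_linear -Ptan_linear; congr (act _ _ (Ptan X _)).
by rewrite /fxi; mulmx_simpl; entrywise.
Qed.

Lemma inf_act_S_deriv t w : I t -> p_sub X w ->
  mx_deriv_in I (fun s => inf_act X (S s w)) t (- 2^-1 *: inf_act X (gad (xi t) (S t w))).
Proof.
move=> It w_p; have [S1_D S2_D] := S_D It w_p.
have := mx_deriv_inB (mx_deriv_inM S1_D (mx_deriv_in_cst I t X))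
  (mx_deriv_inM (mx_deriv_in_cst I t X) S2_D).
congr mx_deriv_in; rewrite mulmx0 mul0mx addr0 add0r.
by rewrite -[LHS]/(inf_act X (gscale _ _)) inf_act_scale inf_act_prp.
Qed.

Lemma B_frame_deriv t w : I t -> p_sub X w ->
  mx_deriv_in I (fun s => act (Rq s) (th s) (inf_act X (S s w))) t (dB t (S t w)).
Proof.
move=> It w_p; have [t_iso|t_acc] := pselect (isolated_in I t).
  exact: mx_deriv_in_isolated.
have [_ xi2_skew] := (xi_p It t_acc).1.
have := mx_deriv_inM (mx_deriv_inM (Rq_D It) (inf_act_S_deriv It w_p)) (mx_deriv_in_tr (th_D It)).
congr mx_deriv_in; rewrite /dB /act trmx_mul xi2_skew.
by move: (inf_act X _) (inf_act X (gad _ _)) (xi t).1 (xi t).2 (Rq t) (th t)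
  => ? ? ? ? ? ?; mulmx_simpl; entrywise.
Qed.

Lemma C_frame_deriv t W : I t -> NSt X W ->
  mx_deriv_in I (fun s => C s W) t (dC t (T t W)).
Proof.
move=> It XW; have [t_iso|t_acc] := pselect (isolated_in I t).
  exact: mx_deriv_in_isolated.
have [_ xi2_skew] := (xi_p It t_acc).1.
have := mx_deriv_inM (mx_deriv_inM (Rq_D It) (T_D It XW)) (mx_deriv_in_tr (th_D It)).
congr mx_deriv_in; rewrite /dC /act /Ptan /fxi trmx_mul xi2_skew.
set P := Pperp X _.
by move: P (T t W) (xi t).1 (xi t).2 (Rq t) (th t) => ? ? ? ? ? ?; mulmx_simpl; entrywise.
Qed.

Lemma dB_NSt t x : I t -> ~ isolated_in I t -> p_sub X x -> NSt (betah t) (dB t x).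
Proof.
move=> It t_acc x_p; apply: act_NSt; [exact: Rq_orth | exact: th_orth |].
exact: frame_derivative_NSt (xi_p It t_acc) x_p.
Qed.

Lemma dC_TSt t W : I t -> TSt (betah t) (dC t W).
Proof. by move=> It; apply: (act_TSt (th t) (Rq_orth It)); exact: Ptan_TSt. Qed.

Lemma Bext_deriv t Z D : I t -> mx_deriv_in I Z t D ->
  mx_deriv_in I (fun s => Bext s (Z s)) t (dB t (S t (pvec X (Ptan X (Z t)))) + Bext t D).
Proof.
move=> It Z_D; rewrite addrC.
have dBS_lin : linear (fun V => dB t (S t (pvec X (Ptan X V)))).
  move=> a V W; rewrite Ptan_linear pvec_lin S_lin ?dB_lin //;
    by apply: pvec_p => //; exact: Ptan_TSt.
rewrite (linear_sum_delta dBS_lin).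
apply: mx_deriv_in_linear_family Z_D _ => // [s Is|i j]; first exact: Bext_linear.
by apply: B_frame_deriv => //; apply: pvec_p => //; exact: Ptan_TSt.
Qed.

Lemma Cext_deriv t Z D : I t -> mx_deriv_in I Z t D ->
  mx_deriv_in I (fun s => Cext s (Z s)) t (dC t (T t (Pperp X (Z t))) + Cext t D).
Proof.
move=> It Z_D; rewrite addrC.
have dCT_lin : linear (fun V => dC t (T t (Pperp X V))).
  move=> a V W; rewrite Pperp_linear T_lin ?dC_linear //; exact: Pperp_NSt.
rewrite (linear_sum_delta dCT_lin).
apply: mx_deriv_in_linear_family Z_D _ => // [s Is|i j]; first exact: Cext_linear.
by apply: C_frame_deriv => //; exact: Pperp_NSt.
Qed.

Lemma B_deriv_split Z t D : I t -> ~ isolated_in I t ->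
  (forall s, I s -> TSt X (Z s)) -> mx_deriv_in I Z t D ->
  exists E K, [/\ mx_deriv_in I (fun s => B s (Z s)) t (E + K),
    NSt (betah t) E, TSt (betah t) K & K = 0 <-> NSt X D].
Proof.
move=> It t_acc XZ Z_D.
exists (dB t (S t (pvec X (Ptan X (Z t))))), (Bext t D); split.
- apply: eq_mx_deriv_in (Bext_deriv It Z_D) => // s /set_mem Is.
  by rewrite /Bext (Ptan_id XtX (XZ s Is)).
- by apply: dB_NSt => //; apply: S_pvec_p => //; exact: Ptan_TSt.
- by apply: B_TSt => //; exact: Ptan_TSt.
- rewrite -(Ptan_eq0 XtX) /Bext; apply: isometry_eq0.
  by apply: B_eucl => //; exact: Ptan_TSt.
Qed.

Lemma C_deriv_split Z t D : I t -> ~ isolated_in I t ->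
  (forall s, I s -> NSt X (Z s)) -> mx_deriv_in I Z t D ->
  exists E K, [/\ mx_deriv_in I (fun s => C s (Z s)) t (E + K),
    TSt (betah t) E, NSt (betah t) K & K = 0 <-> TSt X D].
Proof.
move=> It t_acc XZ Z_D.
exists (dC t (T t (Pperp X (Z t)))), (Cext t D); split.
- apply: eq_mx_deriv_in (Cext_deriv It Z_D) => // s /set_mem Is.
  by rewrite /Cext (Pperp_id XtX (XZ s Is)).
- exact: dC_TSt.
- by apply: C_NSt => //; exact: Pperp_NSt.
- rewrite -(Pperp_eq0 XtX) /Cext; apply: isometry_eq0.
  by apply: C_eucl => //; exact: Pperp_NSt.
Qed.

Lemma extrinsic_rolling_tangent_space : extrinsic_rolling I (TSt X) (fun=> TSt X) (fun=> NSt X)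
  (@Stiefel R n k) (@TSt R n k) (@NSt R n k) beta (fun t => betah t) B C.
Proof.
split.
- split; [|split]; [|exact: B_lin_isom|exact: C_lin_isom].
  move=> t It; split; first exact: beta_TSt.
  by apply: act_Stiefel; [exact: Rq_orth | exact: th_orth | exact: XtX].
- by exists dbeta, (fun t => B t (dbeta t)); split => // t It; exact: betah_deriv.
- move=> Z XZ Z_diff; apply: tparallel_transfer => //.
  + by move=> *; exact: NSt0.
  + by move=> *; exact: NSt0.
  + by move=> t V W _; exact: NStB.
  + by move=> t V _; exact: TSt_NSt_eq0.
  + by move=> t It; apply: B_TSt => //; exact: XZ.
  + by move=> t D It t_acc; exact: B_deriv_split.
- move=> Z XZ Z_diff; apply: tparallel_transfer => //.
  + by move=> *; exact: TSt0.
  + by move=> *; exact: TSt0.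
  + by move=> t V W _; exact: TStB.
  + by move=> t V _ NV TV; exact: TSt_NSt_eq0 TV NV.
  + by move=> t It; apply: C_NSt => //; exact: XZ.
  + by move=> t D It t_acc; exact: C_deriv_split.
Qed.

End Rolling.

Unset Implicit Arguments.

Theorem theorem5p10 (R : realType) (n k : nat) (hkn : (1 <= k <= n)%N)
  (I : set R) (hI : is_interval I) (hI0 : I 0)
  (X : 'M[R]_(n, k)) (hX : Stiefel X)
  (beta dbeta : R -> 'M[R]_(n, k))
  (hbeta : forall t, I t -> TSt X (beta t))
  (hdbeta : forall t, I t -> mx_deriv_in I beta t (dbeta t))
  (S : R -> gT R n k -> gT R n k)
  (Rq : R -> 'M[R]_n) (th : R -> 'M[R]_k)
  (T : R -> 'M[R]_(n, k) -> 'M[R]_(n, k)) :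
  let u := fun t => pvec X (dbeta t) in
  let xi := fun t => S t (u t) in
  (* S : I -> O(p) solves dS = -1/2 pr_p o ad_{S u} o S, S(0) = id *)
  (forall t, I t -> Op X (S t)) ->
  (forall w, p_sub X w -> S 0 w = w) ->
  (forall t w, I t -> p_sub X w ->
     g_deriv_in I (fun s => S s w) t
       (gscale (- 2^-1) (prp X (gad (S t (u t)) (S t w))))) ->
  (* q = (R, theta) : I -> O(n) x O(k) *)
  (forall t, I t -> orthmx (Rq t) /\ orthmx (th t)) ->
  Rq 0 = 1%:M -> th 0 = 1%:M ->
  (forall t, I t -> mx_deriv_in I Rq t (Rq t *m (xi t).1)) ->
  (forall t, I t -> mx_deriv_in I th t (th t *m (xi t).2)) ->
  (* T : I -> O(N_X St) solves dT = - P_X^perp o f_xi o T, T(0) = id *)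
  (forall t, I t -> lin_isom (NSt X) (NSt X) (T t)) ->
  (forall W, NSt X W -> T 0 W = W) ->
  (forall t W, I t -> NSt X W ->
     mx_deriv_in I (fun s => T s W) t (- Pperp X (fxi (xi t) (T t W)))) ->
  let betah := fun t => Rq t *m X *m (th t)^T in
  let B := fun t (V : 'M[R]_(n, k)) =>
    let eta := S t (pvec X V) in
    Rq t *m (eta.1 *m X - X *m eta.2) *m (th t)^T in
  let C := fun t (W : 'M[R]_(n, k)) => Rq t *m T t W *m (th t)^T in
  extrinsic_rolling I
    (TSt X) (fun _ => TSt X) (fun _ => NSt X)
    (@Stiefel R n k) (@TSt R n k) (@NSt R n k)
    beta betah B C.
Proof.
move=> u xi S_Op _ S_D q_orth _ _ Rq_D th_D T_isom _ T_D betah B C.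
exact: (extrinsic_rolling_tangent_space hX hbeta hdbeta S_Op S_D q_orth Rq_D th_D T_isom T_D).
Qed.
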